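(* Let $(\alpha_j)_{j\geq 1}$ be a sequence of pairwise distinct complex numbers and let $(P_k)_{k\geq 0}$ be the polynomials defined in the context. Let $(a_k)_{k\geq0}$ and $(b_k)_{k\geq 0}$ be complex sequences such that both series $\sum_{k=0}^\infty a_k P_k(z)$ and $\sum_{k=0}^\infty b_k P_k(z)$ converge uniformly on compact subsets of $\mathbb{C}$. If $\sum_{k=0}^{\infty} a_k P_k(z) = \sum_{k=0}^{\infty} b_k P_k(z)$ for all $z \in \mathbb{C}$, then $a_k = b_k$ for every $k \geq 0$.
   Context: Every integer $n \geq 1$ can be written uniquely as $n = (1+2+\cdots+m_n) + j_n$ with integers $m_n \geq 0$ and $1 \leq j_n \leq m_n+1$. Define polynomials by $P_0(z) = 1$ and recursively $P_n(z) = (z - \alpha_{j_n}) P_{n-1}(z)$ for $n \geq 1$ (so $\deg P_n = n$; e.g. $P_1=(z-\alpha_1)$, $P_2=(z-\alpha_1)^2$, $P_3=(z-\alpha_1)^2(z-\alpha_2)$, $P_4=(z-\alpha_1)^3(z-\alpha_2)$). *)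

From Stdlib Require Import Reals.
Open Scope R_scope.

Definition Cplx : Type := (R * R)%type.
Definition C0 : Cplx := (0, 0).
Definition C1 : Cplx := (1, 0).
Definition Cadd (x y : Cplx) : Cplx := (fst x + fst y, snd x + snd y).
Definition Csub (x y : Cplx) : Cplx := (fst x - fst y, snd x - snd y).
Definition Cmul (x y : Cplx) : Cplx :=
  (fst x * fst y - snd x * snd y, fst x * snd y + snd x * fst y).
Definition Cnorm (x : Cplx) : R := sqrt (fst x * fst x + snd x * snd x).

(* (m_n, j_n) with n = (1+...+m_n) + j_n, 1 <= j_n <= m_n + 1, for n >= 1,
   computed by walking n = 1, 2, 3, ...: (0,1), (1,1), (1,2), (2,1), ...
   The value at n = 0 is a dummy (0,0). *)
Fixpoint mj (n : nat) : nat * nat :=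
  match n with
  | O => (O, O)
  | S n' => let (m, j) := mj n' in
            if Nat.eqb j (S m) then (S m, 1%nat) else (m, S j)
  end.

Definition jn (n : nat) : nat := snd (mj n).

Fixpoint P (alpha : nat -> Cplx) (n : nat) (z : Cplx) : Cplx :=
  match n with
  | O => C1
  | S n' => Cmul (Csub z (alpha (jn (S n')))) (P alpha n' z)
  end.

Fixpoint psum (alpha : nat -> Cplx) (a : nat -> Cplx) (N : nat) (z : Cplx) : Cplx :=
  match N with
  | O => C0
  | S N' => Cadd (psum alpha a N' z) (Cmul (a N') (P alpha N' z))
  end.

(* compact subsets of Cplx (Heine-Borel): closed and bounded *)
Definition compactC (K : Cplx -> Prop) : Prop :=
  (exists M : R, forall z, K z -> Cnorm z <= M) /\
  (forall z, (forall eps, eps > 0 -> exists w, K w /\ Cnorm (Csub w z) < eps) -> K z).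

Definition series_cv_uc (alpha a : nat -> Cplx) (f : Cplx -> Cplx) : Prop :=
  forall K, compactC K ->
  forall eps, eps > 0 -> exists N0 : nat, forall N z, (N >= N0)%nat -> K z ->
    Cnorm (Csub (psum alpha a N z) (f z)) < eps.

(* Subtracting the two expansions, it suffices to show that a series
   sum_k c_k P_k converging to 0 uniformly on compact sets has all c_k = 0;
   argue by strong induction on k.  If c_k = 0 for k < n, the partial sum of
   length n + d factors as P_n * T with T = sum_(e < d) c_(n+e) P_(n+e) / P_n,
   a polynomial of degree < d satisfying T(beta) = c_n at beta = alpha_(j_(n+1)).
   On a circle |z - beta| = r small enough to keep the other zeros of P_n at
   distance >= r we have |P_n| >= r^n, so T is uniformly small there for large d.
   As deg T < d, T(beta) is the mean of T over the d points beta + r zeta^m,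
   zeta a primitive d-th root of unity, hence |c_n| is small as well. *)

From Stdlib Require Import Reals Lra Lia.
From Coquelicot Require Import Complex.
Open Scope R_scope.
Open Scope C_scope.

Lemma Cnorm_Cmod (x : C) : Cnorm x = Cmod x.
Proof. unfold Cnorm, Cmod; f_equal; simpl; ring. Qed.

Lemma Csub_Cminus (x y : C) : Csub x y = x - y.
Proof. reflexivity. Qed.

Lemma P_S (alpha : nat -> C) n z : P alpha (S n) z = (z - alpha (jn (S n))) * P alpha n z :> C.
Proof. reflexivity. Qed.

Lemma psum_O (alpha a : nat -> C) z : psum alpha a 0 z = 0 :> C.
Proof. reflexivity. Qed.

Lemma psum_S (alpha a : nat -> C) N z :
  psum alpha a (S N) z = psum alpha a N z + a N * P alpha N z :> C.
Proof. reflexivity. Qed.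

Lemma psum_sub (alpha a b : nat -> C) N z :
  psum alpha (fun k => a k - b k) N z = psum alpha a N z - psum alpha b N z :> C.
Proof.
  induction N as [|N IH]; [rewrite !psum_O; ring | rewrite !psum_S, IH; ring].
Qed.

Fixpoint Csum (f : nat -> C) (n : nat) : C :=
  match n with O => 0 | S n => Csum f n + f n end.

Lemma Csum_S f n : Csum f (S n) = Csum f n + f n.
Proof. reflexivity. Qed.

Lemma Csum_ext f g n : (forall m, (m < n)%nat -> f m = g m) -> Csum f n = Csum g n.
Proof.
  induction n as [|n IH]; intros Hfg; simpl; [easy|].
  rewrite IH, Hfg; [easy | lia | intros; apply Hfg; lia].
Qed.

Lemma Csum_plus f g n : Csum (fun m => f m + g m) n = Csum f n + Csum g n.
Proof. induction n as [|n IH]; simpl; [ring | rewrite IH; ring]. Qed.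

Lemma Csum_scal c f n : Csum (fun m => c * f m) n = c * Csum f n.
Proof. induction n as [|n IH]; simpl; [ring | rewrite IH; ring]. Qed.

Lemma Csum_one n : Csum (fun _ => 1) n = INR n.
Proof.
  induction n as [|n IH]; simpl Csum; [easy|].
  rewrite IH, S_INR, RtoC_plus; ring.
Qed.

Lemma Csum_norm_le f n B :
  (forall m, (m < n)%nat -> Cmod (f m) <= B)%R -> (Cmod (Csum f n) <= INR n * B)%R.
Proof.
  induction n as [|n IH]; intros Hf; simpl Csum.
  - rewrite Cmod_0; simpl; lra.
  - rewrite S_INR; eapply Rle_trans; [apply Cmod_triangle|].
    assert (Cmod (Csum f n) <= INR n * B)%R by (apply IH; intros; apply Hf; lia).
    assert (Cmod (f n) <= B) by (apply Hf; lia).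
    lra.
Qed.

Lemma Csum_geometric x n : Csum (fun m => x ^ m) n * (x - 1) = x ^ n - 1.
Proof. induction n as [|n IH]; simpl; [ring | rewrite Cmult_plus_distr_r, IH; ring]. Qed.

Definition primitive_root (zeta : C) (d : nat) : Prop :=
  Cmod zeta = 1 /\ zeta ^ d = 1 /\ forall s, (0 < s < d)%nat -> zeta ^ s <> 1.

Lemma Csum_pow_primitive_root zeta d s :
  primitive_root zeta d -> (0 < s < d)%nat -> Csum (fun m => (zeta ^ m) ^ s) d = 0.
Proof.
  intros [_ [Hd Hprim]] Hs.
  assert (Hnz : zeta ^ s - 1 <> 0).
  { intros E; apply (Hprim s Hs); rewrite <- (Cplus_0_l 1), <- E; ring. }
  rewrite (Csum_ext _ (fun m => (zeta ^ s) ^ m)).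
  2: { intros m _; rewrite <- !Cpow_mult_r, Nat.mul_comm; easy. }
  replace (Csum _ d) with (((zeta ^ s) ^ d - 1) / (zeta ^ s - 1)).
  2: { rewrite <- Csum_geometric; field; easy. }
  rewrite <- Cpow_mult_r, Nat.mul_comm, Cpow_mult_r, Hd, Cpow_1_l.
  unfold Cdiv; ring.
Qed.

Lemma cis_pow (t : R) n : (cos t, sin t) ^ n = (cos (INR n * t), sin (INR n * t)).
Proof.
  induction n as [|n IH].
  - simpl; rewrite Rmult_0_l, cos_0, sin_0; easy.
  - rewrite Cpow_S, IH, S_INR, Rmult_plus_distr_r, Rmult_1_l, cos_plus, sin_plus.
    unfold Cmult; simpl; f_equal; ring.
Qed.

Lemma primitive_root_exists d : (0 < d)%nat -> exists zeta, primitive_root zeta d.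
Proof.
  intros Hd.
  assert (HdR : 0 < INR d) by (apply lt_0_INR; lia).
  pose proof PI_RGT_0.
  exists (cos (2 * PI / INR d), sin (2 * PI / INR d)); split; [|split].
  - unfold Cmod; rewrite <- sqrt_1, <- (sin2_cos2 (2 * PI / INR d)).
    f_equal; unfold Rsqr; simpl; ring.
  - rewrite cis_pow; replace (INR d * (2 * PI / INR d))%R with (2 * PI)%R by (field; lra).
    rewrite cos_2PI, sin_2PI; easy.
  - intros s [Hs0 Hsd] E; rewrite cis_pow in E; injection E as Ecos Esin.
    set (t := (INR s * (2 * PI / INR d))%R) in *.
    assert (Ht0 : 0 < t).
    { apply Rmult_lt_0_compat; [apply lt_0_INR; lia | apply Rdiv_lt_0_compat; lra]. }
    assert (Ht2 : (t < 2 * PI)%R).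
    { assert (INR s < INR d) by (apply lt_INR; lia).
      unfold t; apply (Rmult_lt_reg_r (INR d)); [lra|].
      replace (INR s * (2 * PI / INR d) * INR d)%R with (INR s * (2 * PI))%R by (field; lra).
      nra. }
    destruct (sin_eq_O_2PI_0 t) as [|[Htpi|]]; try lra.
    rewrite Htpi, cos_PI in Ecos; lra.
Qed.

Fixpoint Pquot (alpha : nat -> C) (n e : nat) (z : C) : C :=
  match e with
  | O => 1
  | S e => (z - alpha (jn (S (n + e)))) * Pquot alpha n e z
  end.

Lemma P_add alpha n e z : P alpha (n + e) z = Pquot alpha n e z * P alpha n z :> C.
Proof.
  induction e as [|e IH]; simpl Pquot.
  - now rewrite Nat.add_0_r, Cmult_1_l.
  - rewrite Nat.add_succ_r, P_S, IH; ring.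
Qed.

Lemma Pquot_root alpha n e : Pquot alpha n (S e) (alpha (jn (S n))) = 0.
Proof.
  induction e as [|e IH]; simpl Pquot in *.
  - rewrite Nat.add_0_r; ring.
  - rewrite IH; ring.
Qed.

Definition tail (alpha c : nat -> C) (n d : nat) (z : C) : C :=
  Csum (fun e => c (n + e)%nat * Pquot alpha n e z) d.

Lemma tail_root alpha c n d : tail alpha c n (S d) (alpha (jn (S n))) = c n.
Proof.
  unfold tail; induction d as [|d IH].
  - simpl; rewrite Nat.add_0_r; ring.
  - rewrite Csum_S, IH, Pquot_root; ring.
Qed.

Lemma psum_of_prefix_zero (alpha c : nat -> C) n z :
  (forall k, (k < n)%nat -> c k = 0) -> psum alpha c n z = 0 :> C.
Proof.
  induction n as [|n IH]; intros Hprev; [easy|].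
  rewrite psum_S, IH, Hprev; [ring | lia | intros; apply Hprev; lia].
Qed.

Lemma psum_add_of_prefix_zero (alpha c : nat -> C) n d z :
  (forall k, (k < n)%nat -> c k = 0) ->
  psum alpha c (n + d) z = P alpha n z * tail alpha c n d z :> C.
Proof.
  intros Hprev; induction d as [|d IH].
  - rewrite Nat.add_0_r, psum_of_prefix_zero by easy; unfold tail; simpl; ring.
  - rewrite Nat.add_succ_r, psum_S, IH, P_add; unfold tail; rewrite Csum_S; ring.
Qed.

Section CircleMoments.

Variables (zeta beta : C) (r : R) (d : nat).

Definition circle_moment (h : C -> C) (s : nat) : C :=
  Csum (fun m => h (beta + r * zeta ^ m) * (zeta ^ m) ^ s) d.

(* [h] has the discrete moments of a polynomial of degree [< D] in [z - beta]
   over the [d] points [beta + r zeta^m]. *)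
Definition circle_polynomial (D : nat) (h : C -> C) : Prop :=
  forall s, (s + D <= d)%nat ->
  circle_moment h s = match s with O => INR d * h beta | S _ => 0 end.

Lemma circle_polynomial_ext D h g :
  (forall z, h z = g z) -> circle_polynomial D h -> circle_polynomial D g.
Proof.
  intros Hhg Hh s Hs; rewrite <- Hhg, <- Hh by easy.
  apply Csum_ext; intros; rewrite Hhg; easy.
Qed.

Lemma circle_polynomial_mono D D' h :
  (D <= D')%nat -> circle_polynomial D h -> circle_polynomial D' h.
Proof. intros HD Hh s Hs; apply Hh; lia. Qed.

Lemma circle_polynomial_scal D c h :
  circle_polynomial D h -> circle_polynomial D (fun z => c * h z).
Proof.
  intros Hh s Hs; unfold circle_moment.
  rewrite (Csum_ext _ (fun m => c * (h (beta + r * zeta ^ m) * (zeta ^ m) ^ s)))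
    by (intros; ring).
  rewrite Csum_scal; fold (circle_moment h s); rewrite Hh by easy.
  destruct s; ring.
Qed.

Lemma circle_polynomial_plus D h g :
  circle_polynomial D h -> circle_polynomial D g ->
  circle_polynomial D (fun z => h z + g z).
Proof.
  intros Hh Hg s Hs; unfold circle_moment.
  rewrite (Csum_ext _ (fun m => h (beta + r * zeta ^ m) * (zeta ^ m) ^ s
                              + g (beta + r * zeta ^ m) * (zeta ^ m) ^ s))
    by (intros; ring).
  rewrite Csum_plus; fold (circle_moment h s) (circle_moment g s).
  rewrite Hh, Hg by easy; destruct s; ring.
Qed.

Lemma circle_polynomial_zero D : circle_polynomial D (fun _ => 0).
Proof.
  intros s Hs; unfold circle_moment; cbv beta.
  rewrite Csum_scal; destruct s; ring.
Qed.

Lemma circle_polynomial_one :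
  primitive_root zeta d -> circle_polynomial 1 (fun _ => 1).
Proof.
  intros Hzeta s Hs; unfold circle_moment.
  rewrite (Csum_ext _ (fun m => (zeta ^ m) ^ s)) by (intros; ring).
  destruct s as [|s].
  - rewrite (Csum_ext _ (fun _ => 1)), Csum_one by easy; ring.
  - apply Csum_pow_primitive_root; [easy | lia].
Qed.

Lemma circle_moment_mul_center h s :
  circle_moment (fun z => (z - beta) * h z) s = r * circle_moment h (S s).
Proof.
  unfold circle_moment; rewrite <- Csum_scal.
  apply Csum_ext; intros m _; rewrite Cpow_S; ring.
Qed.

Lemma circle_polynomial_mul_linear D x h :
  circle_polynomial D h -> circle_polynomial (S D) (fun z => (z - x) * h z).
Proof.
  intros Hh.
  apply (circle_polynomial_ext _ (fun z => (z - beta) * h z + (beta - x) * h z));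
    [intros; ring|].
  apply circle_polynomial_plus.
  - intros s Hs; rewrite circle_moment_mul_center, Hh by lia; destruct s; ring.
  - apply circle_polynomial_scal, (circle_polynomial_mono D); [lia | easy].
Qed.

Lemma circle_polynomial_Pquot alpha n e :
  primitive_root zeta d -> circle_polynomial (S e) (Pquot alpha n e).
Proof.
  intros Hzeta; induction e as [|e IH]; simpl Pquot.
  - apply circle_polynomial_one, Hzeta.
  - apply circle_polynomial_mul_linear, IH.
Qed.

Lemma circle_polynomial_tail alpha c n D :
  primitive_root zeta d -> circle_polynomial D (tail alpha c n D).
Proof.
  intros Hzeta; induction D as [|D IH]; unfold tail; simpl Csum.
  - apply circle_polynomial_zero.
  - apply circle_polynomial_plus.
    + apply (circle_polynomial_mono D); [lia | apply IH].
    + apply circle_polynomial_scal, circle_polynomial_Pquot, Hzeta.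
Qed.

Lemma circle_mean_le D h e :
  (0 < d)%nat -> (D <= d)%nat -> circle_polynomial D h ->
  (forall m, (m < d)%nat -> Cmod (h (beta + r * zeta ^ m)) <= e) ->
  Cmod (h beta) <= e.
Proof.
  intros Hd HD Hh Hbound.
  assert (HdR : 0 < INR d) by (apply lt_0_INR; lia).
  assert (Hmean : INR d * h beta = circle_moment h 0) by (symmetry; apply Hh; lia).
  assert (Hle : (Cmod (circle_moment h 0) <= INR d * e)%R).
  { apply Csum_norm_le; intros m Hm; simpl Cpow; rewrite Cmult_1_r; auto. }
  rewrite <- Hmean, Cmod_mult, Cmod_R, Rabs_pos_eq in Hle by lra.
  apply (Rmult_le_reg_l (INR d)); easy.
Qed.

End CircleMoments.

Lemma separating_radius_point (x beta : C) :
  exists r, 0 < r /\ (x = beta \/ 2 * r <= Cmod (beta - x)).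
Proof.
  destruct (Ceq_dec x beta) as [E|E]; [exists 1; split; [lra | now left]|].
  assert (Hpos : 0 < Cmod (beta - x)).
  { apply Cmod_gt_0; intros E'; apply E.
    replace x with (beta - (beta - x)) by ring; rewrite E'; ring. }
  exists (Cmod (beta - x) / 2)%R; split; [lra | right; lra].
Qed.

Lemma separating_radius (x : nat -> C) (beta : C) n :
  exists r, 0 < r /\ forall i, (i <= n)%nat -> x i = beta \/ 2 * r <= Cmod (beta - x i).
Proof.
  induction n as [|n [r [Hr Hsep]]].
  - destruct (separating_radius_point (x 0%nat) beta) as [r [Hr Hsep]].
    exists r; split; [easy|]; intros i Hi.
    replace i with 0%nat by lia; easy.
  - destruct (separating_radius_point (x (S n)) beta) as [r' [Hr' Hsep']].
    exists (Rmin r r'); split; [now apply Rmin_pos|].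
    pose proof (Rmin_l r r'); pose proof (Rmin_r r r').
    intros i Hi; destruct (Nat.eq_dec i (S n)) as [->|Hne].
    + destruct Hsep'; [now left | right; lra].
    + destruct (Hsep i) as [|]; [lia | now left | right; lra].
Qed.

Lemma Cmod_sub_ge_radius (w x beta : C) (r : R) :
  x = beta \/ 2 * r <= Cmod (beta - x) -> Cmod (w - beta) = r -> r <= Cmod (w - x).
Proof.
  intros [->|Hsep] Hw; [lra|].
  pose proof (Cmod_triangle (beta - w) (w - x)) as Htri.
  replace (beta - w + (w - x)) with (beta - x) in Htri by ring.
  replace (beta - w) with (- (w - beta)) in Htri by ring.
  rewrite Cmod_opp in Htri; lra.
Qed.

Lemma P_norm_ge_radius_pow (alpha : nat -> C) (beta w : C) (r : R) n :
  0 < r ->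
  (forall i, (i <= n)%nat -> alpha (jn i) = beta \/ 2 * r <= Cmod (beta - alpha (jn i))) ->
  Cmod (w - beta) = r -> r ^ n <= Cmod (P alpha n w).
Proof.
  intros Hr Hsep Hw; induction n as [|n IH].
  - change (P alpha 0 w) with (RtoC 1); rewrite Cmod_1; simpl; lra.
  - rewrite P_S, Cmod_mult; simpl pow.
    apply Rmult_le_compat; [lra | apply pow_le; lra | |].
    + apply (Cmod_sub_ge_radius _ _ beta); [apply Hsep | easy]; lia.
    + apply IH; intros; apply Hsep; lia.
Qed.

Lemma compactC_disk (rho : R) : compactC (fun z => Cnorm z <= rho).
Proof.
  split; [exists rho; easy|].
  intros z Hz; rewrite Cnorm_Cmod; apply Rle_plus_epsilon; intros eps Heps.
  destruct (Hz eps Heps) as [w [Hw Hwz]]; change C in z, w.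
  rewrite Cnorm_Cmod in Hw; rewrite Cnorm_Cmod, Csub_Cminus in Hwz.
  pose proof (Cmod_triangle w (- (w - z))) as Htri.
  replace (w + - (w - z)) with z in Htri by ring.
  rewrite Cmod_opp in Htri; lra.
Qed.

Lemma coef_norm_le_of_series_cv_uc_zero (alpha c : nat -> C) n e :
  series_cv_uc alpha c (fun _ => RtoC 0) -> (forall k, (k < n)%nat -> c k = 0) ->
  0 < e -> Cmod (c n) <= e.
Proof.
  intros Hcv Hprev He.
  set (beta := alpha (jn (S n))).
  destruct (separating_radius (fun i => alpha (jn i)) beta n) as [r [Hr Hsep]].
  assert (Hrn : 0 < r ^ n) by (apply pow_lt; lra).
  destruct (Hcv _ (compactC_disk (Cmod beta + r)) (e * r ^ n)%R) as [N0 HN0]; [nra|].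
  destruct (primitive_root_exists (S N0)) as [zeta Hzeta]; [lia|].
  rewrite <- (tail_root alpha c n N0).
  apply (circle_mean_le zeta beta r (S N0) (S N0)); [lia | lia | |].
  { apply circle_polynomial_tail, Hzeta. }
  intros m _; set (w := beta + r * zeta ^ m).
  assert (Hw : Cmod (w - beta) = r).
  { replace (w - beta) with (r * zeta ^ m) by (unfold w; ring).
    rewrite Cmod_mult, Cmod_pow, (proj1 Hzeta), pow1, Cmod_R, Rabs_pos_eq; lra. }
  assert (Hdisk : Cnorm w <= Cmod beta + r).
  { rewrite Cnorm_Cmod; replace w with (beta + (w - beta)) by ring.
    rewrite <- Hw; apply Cmod_triangle. }
  specialize (HN0 (n + S N0)%nat w ltac:(lia) Hdisk).
  rewrite Cnorm_Cmod, Csub_Cminus, psum_add_of_prefix_zero in HN0 by easy.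
  replace (_ - _) with (P alpha n w * tail alpha c n (S N0) w) in HN0 by ring.
  rewrite Cmod_mult in HN0.
  pose proof (P_norm_ge_radius_pow alpha beta w r n Hr Hsep Hw).
  pose proof (Cmod_ge_0 (tail alpha c n (S N0) w)).
  nra.
Qed.

Lemma coef_eq0_of_series_cv_uc_zero (alpha c : nat -> C) :
  series_cv_uc alpha c (fun _ => RtoC 0) -> forall n, c n = 0.
Proof.
  intros Hcv n; induction n as [n IH] using (well_founded_induction Wf_nat.lt_wf).
  apply Cmod_eq_0, Rle_antisym; [|apply Cmod_ge_0].
  apply Rle_plus_epsilon; intros e He; rewrite Rplus_0_l.
  now apply (coef_norm_le_of_series_cv_uc_zero alpha).
Qed.

Lemma series_cv_uc_sub (alpha a b : nat -> C) (f g : C -> C) :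
  series_cv_uc alpha a f -> series_cv_uc alpha b g ->
  series_cv_uc alpha (fun k => a k - b k) (fun z => f z - g z).
Proof.
  intros Ha Hb K HK eps Heps.
  destruct (Ha K HK (eps / 2)%R) as [Na HNa]; [lra|].
  destruct (Hb K HK (eps / 2)%R) as [Nb HNb]; [lra|].
  exists (Nat.max Na Nb); intros N z HN Kz.
  specialize (HNa N z ltac:(lia) Kz); specialize (HNb N z ltac:(lia) Kz).
  rewrite Cnorm_Cmod, Csub_Cminus in HNa, HNb |- *; rewrite psum_sub.
  replace (_ - _) with ((psum alpha a N z - f z) + - (psum alpha b N z - g z)) by ring.
  pose proof (Cmod_triangle (psum alpha a N z - f z) (- (psum alpha b N z - g z))).
  rewrite Cmod_opp in *; lra.
Qed.

Lemma series_cv_uc_ext (alpha a : nat -> C) (f g : C -> C) :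
  (forall z, f z = g z) -> series_cv_uc alpha a f -> series_cv_uc alpha a g.
Proof.
  intros Hfg Hf K HK eps Heps; destruct (Hf K HK eps Heps) as [N0 HN0].
  exists N0; intros N z HN Kz; rewrite <- Hfg; now apply HN0.
Qed.

Theorem lemma3 (alpha : nat -> Cplx)
  (Hdist : forall i j : nat, (1 <= i)%nat -> (1 <= j)%nat -> i <> j -> alpha i <> alpha j)
  (a b : nat -> Cplx) (f g : Cplx -> Cplx)
  (Ha : series_cv_uc alpha a f) (Hb : series_cv_uc alpha b g)
  (Hfg : forall z : Cplx, f z = g z) :
  forall k : nat, a k = b k.
Proof.
  intros k.
  assert (Hdiff : series_cv_uc alpha (fun k => a k - b k) (fun _ => RtoC 0)).
  { apply (series_cv_uc_ext _ _ (fun z => f z - g z)).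
    - intros z; rewrite Hfg; apply Cplus_opp_r.
    - now apply series_cv_uc_sub. }
  pose proof (coef_eq0_of_series_cv_uc_zero _ _ Hdiff k) as Hk.
  change (a k = b k :> C); replace (a k) with (a k - b k + b k) by ring.
  rewrite Hk; ring.
Qed.
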